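(* Let $b\in\mathbb{R}^n$, $c\in\mathbb{R}^m$, $D\in\mathbb{R}^{m\times n}$ surjective, $K\in\{0,\ldots,m-1\}$, $\gamma>0$, and let $x^*$ be a d-stationary point of $$\min_{x\in\mathbb{R}^n}\ \tfrac12\|b-x\|_2^2+\gamma T_{K,m,1}(Dx-c).$$ Let $\overline{x}$ be any point with $D\overline{x}=c$. If $\gamma>\|b-\overline{x}\|_2/\sigma_{\min}(D)$, then $T_{K,m,1}(Dx^*-c)=0$.
   Context: $T_{K,m,1}(z)$ for $z\in\mathbb{R}^m$ is the sum of the $m-K$ smallest values among $|z_1|,\ldots,|z_m|$. $\sigma_{\min}(D)$ is the smallest nonzero singular value of $D$. A point is d-stationary if the directional derivative of the objective there is $\ge0$ in every direction. *)

From HB Require Import structures.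
From mathcomp Require Import all_boot all_order all_algebra.
From mathcomp Require Import all_classical all_reals all_analysis.
Set Implicit Arguments. Unset Strict Implicit. Unset Printing Implicit Defensive.
Import Order.TTheory GRing.Theory Num.Theory.
Import numFieldNormedType.Exports.
Local Open Scope classical_set_scope.
Local Open Scope ring_scope.

Definition norm2 {R : realType} {n : nat} (v : 'cV[R]_n) : R :=
  Num.sqrt (\sum_(i < n) v i 0 ^+ 2).

Definition Ttrim {R : realType} {m : nat} (K : nat) (z : 'cV[R]_m) : R :=
  \sum_(a <- take (m - K) (sort <=%R [seq `|z i 0| | i <- enum 'I_m])) a.

Definition sigma_min {R : realType} {m n : nat} (D : 'M[R]_(m, n)) : R :=
  Num.sqrt (inf [set a : R | eigenvalue (D^T *m D) a /\ a != 0]).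

Definition objective {R : realType} {m n : nat} (b : 'cV[R]_n) (c : 'cV[R]_m)
  (D : 'M[R]_(m, n)) (K : nat) (gamma : R) (x : 'cV[R]_n) : R :=
  2^-1 * norm2 (b - x) ^+ 2 + gamma * Ttrim K (D *m x - c).

Definition dstationary {R : realType} {n : nat} (F : 'cV[R]_n -> R)
  (x : 'cV[R]_n) : Prop :=
  forall d : 'cV[R]_n, exists l : R,
    ((fun t : R => (F (x + t *: d) - F x) / t) @ 0^'+ --> l) /\ 0 <= l.

From mathcomp Require Import all_boot all_order all_algebra.
From mathcomp Require Import all_classical all_reals all_analysis.
From mathcomp Require Import ring lra.
Import Order.TTheory GRing.Theory Num.Theory.
Import numFieldNormedType.Exports.
Set Implicit Arguments. Unset Strict Implicit.
Local Open Scope classical_set_scope.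
Local Open Scope ring_scope.

(* Write z = D x* - c, g = b - x* and mu = sigma_min(D)^2, the smallest
   eigenvalue of D D^T.  Moving from x* towards xbar scales z, hence T, by
   (1 - t), so d-stationarity in that direction gives ||g|| <= ||b - xbar||.
   If T(z) > 0, some z_j counted by T is nonzero; moving along -w, where w is
   the least-norm preimage of sign(z_j) e_j under D, lowers T at unit rate, so
   d-stationarity gives gamma <= <g, w>, while ||w||^2 <= 1/mu.  Hence
   gamma <= ||g|| / sigma_min(D) <= ||b - xbar|| / sigma_min(D). *)

Section SquaredNorm.
Variables (R : realType) (n : nat).
Implicit Types (u v : 'cV[R]_n).

Definition sqnorm v := \sum_(i < n) v i 0 ^+ 2.
Definition dotp u v := \sum_(i < n) u i 0 * v i 0.

Lemma sqnorm_ge0 v : 0 <= sqnorm v.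
Proof. by apply: sumr_ge0 => i _; exact: sqr_ge0. Qed.

Lemma sqnorm_eq0 v : sqnorm v = 0 -> v = 0.
Proof.
move/eqP; rewrite psumr_eq0 => [/allP h|i _]; last exact: sqr_ge0.
apply/matrixP => i j; rewrite ord1 mxE; apply/eqP; rewrite -sqrf_eq0.
by apply: h; rewrite mem_index_enum.
Qed.

Lemma norm2_sqr v : norm2 v ^+ 2 = sqnorm v.
Proof. by rewrite /norm2 sqr_sqrtr // sqnorm_ge0. Qed.

Lemma sqnorm_subZ u v a :
  sqnorm (u - a *: v) = sqnorm u - 2 * a * dotp u v + a ^+ 2 * sqnorm v.
Proof.
rewrite /sqnorm /dotp !mulr_sumr -sumrB -big_split /=; apply: eq_bigr => i _.
rewrite !mxE; ring.
Qed.

Lemma dotpN u v : dotp u (- v) = - dotp u v.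
Proof. by rewrite /dotp -sumrN; apply: eq_bigr => i _; rewrite mxE mulrN. Qed.

(* Cauchy-Schwarz in disguise: expand 0 <= ||g - gamma mu w||^2. *)
Lemma sqnorm_ge_of_dotp (g w : 'cV[R]_n) (gamma mu : R) :
  0 < gamma -> 0 < mu -> gamma <= dotp g w -> mu * sqnorm w <= 1 ->
  gamma ^+ 2 * mu <= sqnorm g.
Proof.
move=> gamma0 mu0 hgw hw.
have := sqnorm_ge0 (g - (gamma * mu) *: w); rewrite sqnorm_subZ.
have gm0 : 0 <= gamma * mu by rewrite mulr_ge0 // ltW.
have hdot : gamma * mu * gamma <= gamma * mu * dotp g w by exact: ler_wpM2l.
have hsq : (gamma * mu) ^+ 2 * sqnorm w <= gamma ^+ 2 * mu.
  have g2mu0 : 0 <= gamma ^+ 2 * mu by rewrite mulr_ge0 ?sqr_ge0 // ltW.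
  have := ler_wpM2l g2mu0 hw; rewrite mulr1; congr (_ <= _); ring.
nra.
Qed.

End SquaredNorm.

Section SumSmallest.
Variable R : realType.

Lemma sorted_take_sum_le_mask (s : seq R) (msk : bitseq) :
  sorted <=%R s -> size msk = size s ->
  \sum_(a <- take (count id msk) s) a <= \sum_(a <- mask msk s) a.
Proof.
elim: s msk => [|x s IH] [|bb msk] //= hs [hsz].
have hs' : sorted <=%R s by apply: path_sorted hs.
case: bb => /=; first by rewrite !big_cons lerD2l IH.
case hk : (count id msk) => [|k].
  have : size (mask msk s) = 0%N by rewrite size_mask // hk.
  by move/size0nil => ->; rewrite !big_nil.
apply: le_trans (IH _ hs' hsz); rewrite hk /= big_cons.
have hks : (k < size s)%N by rewrite -hsz; have := count_size id msk; rewrite hk.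
rewrite (take_nth 0 hks) -cats1 big_cat /= big_cons big_nil addr0 [x + _]addrC.
rewrite lerD2l; move: hs; rewrite (path_sortedE le_trans) => /andP[/all_nthP hall _].
exact: hall.
Qed.

Variable m : nat.
Implicit Types (f : 'I_m -> R) (S : {set 'I_m}).

Definition sum_smallest k f :=
  \sum_(a <- take k (sort <=%R [seq f i | i <- enum 'I_m])) a.

Definition argsort f := sort (relpre f <=%R) (enum 'I_m).

Lemma perm_argsort f : perm_eq (argsort f) (index_enum 'I_m).
Proof.
apply: uniq_perm; first by rewrite sort_uniq enum_uniq.
  exact: index_enum_uniq.
by move=> i; rewrite mem_sort mem_enum mem_index_enum.
Qed.

Lemma sum_smallestE k f : sum_smallest k f = \sum_(i <- take k (argsort f)) f i.
Proof. by rewrite /sum_smallest sort_map -map_take big_map. Qed.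

Lemma sum_smallest_le k f S : #|S| = k -> sum_smallest k f <= \sum_(i in S) f i.
Proof.
move=> hS.
have -> : \sum_(i in S) f i =
    \sum_(a <- mask [seq i \in S | i <- argsort f] [seq f i | i <- argsort f]) a.
  rewrite -map_mask big_map -filter_mask big_filter.
  by apply: perm_big; rewrite perm_sym perm_argsort.
have hc : count id [seq i \in S | i <- argsort f] = k.
  rewrite count_map -hS -sum1_card -sum1_count.
  by apply: perm_big; exact: perm_argsort.
rewrite /sum_smallest sort_map -hc; apply: sorted_take_sum_le_mask.
  by rewrite sorted_map; apply: sort_sorted => i j; exact: le_total.
by rewrite !size_map.
Qed.

Lemma sum_smallest_attained k f : (k <= m)%N ->
  exists S, #|S| = k /\ sum_smallest k f = \sum_(i in S) f i.
Proof.
move=> hk.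
have hu : uniq (take k (argsort f)) by rewrite take_uniq // sort_uniq enum_uniq.
exists [set i in take k (argsort f)]; split.
  rewrite cardsE; move/card_uniqP: hu => ->.
  by rewrite size_take size_sort size_enum_ord; case: ltngtP hk.
by rewrite sum_smallestE big_uniq //; apply: eq_bigl => i; rewrite inE.
Qed.

Lemma sum_smallest_ge0 k f : (forall i, 0 <= f i) -> 0 <= sum_smallest k f.
Proof. by move=> h; rewrite sum_smallestE; apply: sumr_ge0 => i _. Qed.

Lemma sum_smallestZ k f a : (k <= m)%N -> 0 <= a ->
  sum_smallest k (fun i => a * f i) = a * sum_smallest k f.
Proof.
move=> hk ha.
have [S [hS eS]] := sum_smallest_attained f hk.
have [S' [hS' eS']] := sum_smallest_attained (fun i => a * f i) hk.
apply/le_anti/andP; split.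
  by apply: le_trans (sum_smallest_le _ hS) _; rewrite eS -mulr_sumr.
by rewrite eS' -mulr_sumr; apply: ler_wpM2l => //; exact: sum_smallest_le.
Qed.

Lemma sum_smallest_lower k f f' S (j : 'I_m) (t : R) :
  (k <= m)%N -> #|S| = k -> sum_smallest k f = \sum_(i in S) f i ->
  j \in S -> 0 <= t -> (forall i, f' i = f i - (if i == j then t else 0)) ->
  sum_smallest k f' = sum_smallest k f - t.
Proof.
move=> hk hS eS hj ht hf.
have sumB S0 : \sum_(i in S0) f' i =
    \sum_(i in S0) f i - \sum_(i in S0) (if i == j then t else 0).
  by rewrite -sumrB; apply: eq_bigr => i _; rewrite hf.
have sum_ind S0 : \sum_(i in S0) (if i == j then t else 0) = (j \in S0)%:R * t.
  case: (boolP (j \in S0)) => hj0; rewrite ?mul1r ?mul0r.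
    by rewrite (bigD1 j) //= eqxx big1 ?addr0 // => i /andP[_ /negbTE ->].
  by rewrite big1 // => i hi; case: eqP => // eij; rewrite -eij hi in hj0.
apply/le_anti/andP; split.
  by apply: le_trans (sum_smallest_le _ hS) _; rewrite sumB eS sum_ind hj mul1r.
have [S' [hS' ->]] := sum_smallest_attained f' hk.
rewrite sumB sum_ind; apply: lerB; first exact: sum_smallest_le.
by case: (j \in S'); rewrite ?mul1r ?mul0r.
Qed.

End SumSmallest.

Section Trimmed.
Variables (R : realType) (m K : nat).
Implicit Types (z : 'cV[R]_m).

Lemma TtrimE z : Ttrim K z = sum_smallest (m - K) (fun i => `|z i 0|).
Proof. by []. Qed.

Lemma Ttrim_ge0 z : 0 <= Ttrim K z.
Proof. by apply: sum_smallest_ge0. Qed.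

Lemma TtrimZ z (a : R) : 0 <= a -> Ttrim K (a *: z) = a * Ttrim K z.
Proof.
move=> a0; rewrite !TtrimE -sum_smallestZ ?leq_subr //.
by congr sum_smallest; apply: funext => i; rewrite mxE normrM ger0_norm.
Qed.

Lemma Ttrim_descent z : 0 < Ttrim K z ->
  exists (j : 'I_m) (s eps : R), [/\ s ^+ 2 = 1, 0 < eps &
    forall t, 0 < t < eps -> Ttrim K (z - t *: (s *: delta_mx j 0)) = Ttrim K z - t].
Proof.
move=> Tpos.
have [S [hS eS]] := sum_smallest_attained (fun i => `|z i 0|) (leq_subr K m).
have [j hjS hj0] : exists2 j, j \in S & z j 0 != 0.
  have : \sum_(i in S) `|z i 0| != 0 by rewrite -eS gt_eqF.
  rewrite psumr_eq0 // => /allPn [j _]; rewrite negb_imply normr_eq0 => /andP[].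
  by exists j.
exists j, (Num.sg (z j 0)), `|z j 0|; split; first by rewrite sqr_sg hj0.
  by rewrite normr_gt0.
move=> t /andP[t0 tz].
rewrite !TtrimE; apply: (sum_smallest_lower (leq_subr K m) hS eS hjS (ltW t0)) => i.
rewrite !mxE; case: (eqVneq i j) => [->|_] /=; last by rewrite !mulr0 !subr0.
rewrite ?eqxx /= mulr1 [t * _]mulrC {1}(numEsg (z j 0)) -mulrBr normrM normr_sg hj0 mul1r.
by rewrite ger0_norm // subr_ge0 ltW.
Qed.

End Trimmed.

Section DirectionalDerivative.
Variable R : realType.

Lemma cvg_right_eventually_affine (f : R -> R) (l a b : R) :
  f @ 0^'+ --> l -> (\forall t \near 0^'+, f t = a + b * t) -> l = a.
Proof.
move=> hl hn.
have h1 : (fun t => a + b * t) @ 0^'+ --> l.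
  by apply: cvg_trans hl; apply: near_eq_cvg; near=> t; rewrite (near hn t).
have h2 : (fun t => a + b * t) @ 0^'+ --> a.
  apply: cvg_at_right_filter.
  have := cvgD (cvg_cst a) (cvgM (cvg_cst b) (@cvg_id _ (nbhs (0:R)))).
  by rewrite mulr0 addr0; apply; exact: nbhs_filter.
exact: cvg_unique _ h1 h2.
Unshelve. all: by end_near.
Qed.

(* The right derivative of the objective along d is then -<b - x, d> + gamma tau. *)
Lemma dstationary_linear_rate m n (b : 'cV[R]_n) (c : 'cV[R]_m)
    (D : 'M[R]_(m, n)) K gamma (xs d : 'cV[R]_n) (tau eps : R) :
  dstationary (objective b c D K gamma) xs -> 0 < eps ->
  (forall t, 0 < t < eps ->
     Ttrim K (D *m (xs + t *: d) - c) = Ttrim K (D *m xs - c) + t * tau) ->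
  0 <= - dotp (b - xs) d + gamma * tau.
Proof.
move=> hxs he hT.
have [l [hl l0]] := hxs d.
suff <- : l = - dotp (b - xs) d + gamma * tau by [].
apply: (@cvg_right_eventually_affine _ l _ (2^-1 * sqnorm d) hl).
near=> t.
have ht : 0 < t < eps.
  by apply/andP; split; near: t; [exact: nbhs_right_gt | exact: nbhs_right_lt].
rewrite /objective hT // !norm2_sqr.
have -> : b - (xs + t *: d) = (b - xs) - t *: d by rewrite opprD addrA.
rewrite sqnorm_subZ; field.
by case/andP: ht => t0 _; rewrite gt_eqF.
Unshelve. all: by end_near.
Qed.

Lemma dstationary_sqnorm_le m n (b : 'cV[R]_n) (c : 'cV[R]_m)
    (D : 'M[R]_(m, n)) K gamma (xs xbar : 'cV[R]_n) :
  0 <= gamma -> dstationary (objective b c D K gamma) xs -> D *m xbar = c ->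
  sqnorm (b - xs) <= sqnorm (b - xbar).
Proof.
move=> gamma0 hxs hxbar.
set z := D *m xs - c.
have hdir : 0 <= - dotp (b - xs) (xbar - xs) + gamma * (- Ttrim K z).
  apply: (dstationary_linear_rate hxs ltr01) => t /andP[t0 t1].
  have -> : D *m (xs + t *: (xbar - xs)) - c = (1 - t) *: z.
    rewrite mulmxDr -scalemxAr mulmxBr hxbar /z.
    by apply/matrixP => i j; rewrite !mxE; ring.
  by rewrite TtrimZ ?subr_ge0 ?ltW //; ring.
have -> : b - xbar = (b - xs) - 1 *: (xbar - xs).
  by apply/matrixP => i j; rewrite !mxE; ring.
rewrite sqnorm_subZ expr1n mul1r.
have := sqnorm_ge0 (xbar - xs); have := Ttrim_ge0 K z.
nra.
Qed.

End DirectionalDerivative.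

Section GramMatrix.
Variable R : realType.

Definition bform m (B : 'M[R]_m) (u w : 'rV[R]_m) := (u *m B *m w^T) 0 0.

Lemma bform1 m (u : 'rV[R]_m) : bform 1%:M u u = sqnorm u^T.
Proof. by rewrite /bform mulmx1 mxE; apply: eq_bigr => i _; rewrite !mxE. Qed.

Lemma bform1_ge0 m (u : 'rV[R]_m) : 0 <= bform 1%:M u u.
Proof. by rewrite bform1 sqnorm_ge0. Qed.

Lemma bform1_eq0 m (u : 'rV[R]_m) : bform 1%:M u u = 0 -> u = 0.
Proof. by rewrite bform1 => /sqnorm_eq0 /(congr1 trmx); rewrite trmxK trmx0. Qed.

Lemma bform1_gt0 m (u : 'rV[R]_m) : u != 0 -> 0 < bform 1%:M u u.
Proof.
by move=> un0; rewrite lt_def bform1_ge0 andbT; apply: contra un0 => /eqP/bform1_eq0->.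
Qed.

Lemma bform0 m (B : 'M[R]_m) : bform B 0 0 = 0.
Proof. by rewrite /bform !mul0mx mxE. Qed.

Lemma bformZ m (B : 'M[R]_m) a u : bform B (a *: u) (a *: u) = a ^+ 2 * bform B u u.
Proof. by rewrite /bform linearZ /= -!scalemxAl -scalemxAr !mxE; ring. Qed.

Lemma bform_sym m (B : 'M[R]_m) u w : B^T = B -> bform B w u = bform B u w.
Proof.
move=> hB; have e (M : 'M[R]_1) : M 0 0 = M^T 0 0 by rewrite mxE.
by rewrite /bform e !trmx_mul trmxK hB mulmxA.
Qed.

Lemma bform_subZ m (B : 'M[R]_m) u w t : B^T = B ->
  bform B (u - t *: w) (u - t *: w) =
  bform B u u - 2 * t * bform B u w + t ^+ 2 * bform B w w.
Proof.
move=> hB.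
have -> : bform B (u - t *: w) (u - t *: w) =
    bform B u u - t * bform B w u - t * bform B u w + t ^+ 2 * bform B w w.
  have trD : (u - t *: w)^T = u^T - t *: w^T by apply/matrixP => i j; rewrite !mxE.
  by rewrite /bform trD !mulmxBl !mulmxBr -!scalemxAl -!scalemxAr !mxE; ring.
by rewrite (bform_sym u w hB); ring.
Qed.

Lemma bform_gram m n (D : 'M[R]_(m, n)) (w : 'rV[R]_m) :
  bform (D *m D^T) w w = bform 1%:M (w *m D) (w *m D).
Proof. by rewrite /bform mulmx1 trmx_mul !mulmxA. Qed.

Lemma continuous_bform m (B : 'M[R]_m) : continuous (fun v => bform B v v).
Proof.
have -> : (fun v => bform B v v) =
    (fun v : 'rV[R]_m => \sum_(j < m) (\sum_(k < m) v 0 k * B k j) * v 0 j).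
  by apply: funext => v; rewrite /bform !mxE; apply: eq_bigr => j _; rewrite !mxE.
apply: (@continuous_big _ _ +%R 0 xpredT add_continuous) => j _ v.
apply: (continuousM (s := fun v : 'rV[R]_m => \sum_(k < m) v 0 k * B k j)
   (t := fun v : 'rV[R]_m => v 0 j)); last exact: coord_continuous.
apply: (@continuous_big _ _ +%R 0 xpredT add_continuous) => k _ x.
apply: (continuousM (s := fun v : 'rV[R]_m => v 0 k) (t := fun=> B k j)).
  exact: coord_continuous.
exact: cst_continuous.
Qed.

(* Attained by compactness of the unit sphere. *)
Lemma rayleigh_min m (A : 'M[R]_m) : (0 < m)%N ->
  exists v, bform 1%:M v v = 1 /\
    forall w, bform A v v * bform 1%:M w w <= bform A w w.
Proof.
move=> hm.
pose S := [set v : 'rV[R]_m | bform 1%:M v v = 1].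
have S0 : S !=set0.
  exists (delta_mx 0 (Ordinal hm)); rewrite /S /= bform1 /sqnorm.
  rewrite (bigD1 (Ordinal hm)) //= !mxE !eqxx /= big1 ?addr0 ?expr1n //.
  by move=> i /negbTE hi; rewrite !mxE hi andbF expr0n.
have cS : compact S.
  have cube := @rV_compact _ m (fun=> `[(-1 : R), 1]%classic)
     (fun=> @segment_compact _ _ _).
  apply: (subclosed_compact _ cube).
    apply: (@preimage_closed _ _ (fun v => bform 1%:M v v) [set 1]).
      by move=> v _; exact: continuous_bform.
    exact: closed_eq.
  move=> v; rewrite /S /= => hv i.
  have : v 0 i ^+ 2 <= 1.
    rewrite -hv bform1 /sqnorm (bigD1 i) //= mxE lerDl.
    by apply: sumr_ge0 => k _; exact: sqr_ge0.
  by rewrite /= in_itv /= => h; apply/andP; split; nra.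
have [v vS vmin] :=
  compact_EVT_min S0 cS (continuous_subspaceT (@continuous_bform m A)).
move: vS; rewrite inE /S /= => vS.
exists v; split => // w.
have [->|wn0] := eqVneq w 0; first by rewrite !bform0 mulr0.
have hp := bform1_gt0 wn0.
pose r := Num.sqrt (bform 1%:M w w).
have r0 : 0 < r by rewrite sqrtr_gt0.
have hr2 : r ^+ 2 = bform 1%:M w w by rewrite sqr_sqrtr // ltW.
have := vmin (r^-1 *: w); rewrite inE /S /= !bformZ exprVn hr2 mulVf ?gt_eqF //.
by move=> /(_ erefl) h; rewrite -ler_pdivlMr // [_ / _]mulrC.
Qed.

(* A minimiser v of the Rayleigh quotient of a symmetric A is an eigenvector:
   u := v (A - mu) satisfies 0 <= Q(v - t u) = -2 t |u|^2 + t^2 Q(u),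
   which forces u = 0 for small t > 0. *)
Lemma rayleigh_min_eigen m (A : 'M[R]_m) v : A^T = A -> bform 1%:M v v = 1 ->
  (forall w, bform A v v * bform 1%:M w w <= bform A w w) ->
  v *m A = bform A v v *: v.
Proof.
move=> hA hv hmin.
set mu := bform A v v.
pose B := A - mu%:M.
have hB : B^T = B by rewrite /B linearB /= tr_scalar_mx hA.
have hq w : bform B w w = bform A w w - mu * bform 1%:M w w.
  by rewrite /bform /B mulmxBr mulmxBl mul_mx_scalar -!scalemxAl mulmx1 !mxE.
pose u := v *m B.
have hvu : bform B v u = bform 1%:M u u by rewrite /bform mulmx1.
have hQ : 0 <= bform B u u by rewrite hq subr_ge0.
have hF := bform1_ge0 u.
have hq0 : bform B v v = 0 by rewrite hq hv mulr1 subrr.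
pose t := bform 1%:M u u / (bform B u u + 1).
have ht : t * (bform B u u + 1) = bform 1%:M u u.
  by rewrite /t divfK // gt_eqF // ltr_wpDl.
have h0 : 0 <= bform B (v - t *: u) (v - t *: u) by rewrite hq subr_ge0.
rewrite bform_subZ // hq0 hvu in h0.
have t0 : 0 <= t by rewrite /t divr_ge0 // addr_ge0.
have u0 : u = 0 by apply: bform1_eq0; apply/eqP; rewrite eq_le hF andbT; nra.
by apply/eqP; rewrite -subr_eq0 -mul_mx_scalar -mulmxBr; exact/eqP.
Qed.

Lemma posdef_unitmx m (A : 'M[R]_m) mu : 0 < mu ->
  (forall w, mu * bform 1%:M w w <= bform A w w) -> A \in unitmx.
Proof.
move=> mu0 hmu; rewrite -row_free_unit -kermx_eq0.
apply: contraT => /rowV0Pn [w /sub_kermxP hw wn0].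
have := hmu w; rewrite {2}/bform hw mul0mx mxE pmulr_rle0 // => hle.
by move: (bform1_gt0 wn0); rewrite ltNge hle.
Qed.

(* sigma_min D ^ 2 is the least nonzero eigenvalue of D^T D, which shares its
   nonzero eigenvalues with D D^T (via a |-> a D and r |-> r D^T). *)
Lemma sigma_min_rayleigh m n (D : 'M[R]_(m, n)) (v : 'rV[R]_m) (mu : R) :
  0 < mu -> bform 1%:M v v = 1 -> v *m (D *m D^T) = mu *: v ->
  (forall w, mu * bform 1%:M w w <= bform (D *m D^T) w w) ->
  sigma_min D = Num.sqrt mu.
Proof.
move=> mu0 hv hev hmin.
pose E := [set a : R | eigenvalue (D^T *m D) a /\ a != 0].
suff infE : inf E = mu by rewrite /sigma_min -/E infE.
have Emu : E mu.
  split; last by rewrite gt_eqF.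
  apply/eigenvalueP; exists (v *m D); first by rewrite mulmxA -(mulmxA v) hev scalemxAl.
  apply/eqP => vD0; move: hev; rewrite mulmxA vD0 mul0mx => /esym/eqP.
  rewrite scaler_eq0 gt_eqF //= => /eqP v0.
  by move: hv; rewrite v0 bform0 => /eqP; rewrite eq_sym oner_eq0.
have Elb : lbound E mu.
  move=> a [/eigenvalueP [r hr rn0] an0].
  pose w := r *m D^T.
  have hwA : w *m (D *m D^T) = a *: w.
    by rewrite /w mulmxA -(mulmxA r) hr -scalemxAl.
  have wn0 : w != 0.
    apply/eqP => w0; move: hr; rewrite mulmxA -/w w0 mul0mx => /esym /eqP.
    by rewrite scaler_eq0 (negbTE an0) (negbTE rn0).
  have hw : bform (D *m D^T) w w = a * bform 1%:M w w.
    by rewrite /bform hwA -scalemxAl mulmx1 !mxE.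
  by move: (hmin w); rewrite hw ler_pM2r // bform1_gt0.
apply/le_anti/andP; split; first by apply: ge_inf => //; exists mu.
by apply: lb_le_inf => //; exists mu.
Qed.

Lemma surjective_gram m n (D : 'M[R]_(m, n)) :
  (forall y : 'cV[R]_m, exists x : 'cV[R]_n, D *m x = y) -> (0 < m)%N ->
  exists mu : R, [/\ 0 < mu, sigma_min D = Num.sqrt mu,
    forall w, mu * bform 1%:M w w <= bform (D *m D^T) w w &
    D *m D^T \in unitmx].
Proof.
move=> hD hm.
have hA : (D *m D^T)^T = D *m D^T by rewrite trmx_mul trmxK.
have [v [hv hmin]] := rayleigh_min (D *m D^T) hm.
have mu0 : 0 < bform (D *m D^T) v v.
  rewrite bform_gram bform1_gt0 //; apply/eqP => vD0.
  have [x hx] := hD v^T.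
  move: hv; rewrite /bform mulmx1 -hx mulmxA vD0 mul0mx mxE => /eqP.
  by rewrite eq_sym oner_eq0.
exists (bform (D *m D^T) v v); split => //.
- exact: sigma_min_rayleigh mu0 hv (rayleigh_min_eigen hA hv hmin) hmin.
- exact: posdef_unitmx mu0 hmin.
Qed.

(* Take the least-norm preimage w = (y D)^T with y = e (D D^T)^-1:
   ||w||^2 = <y, e> = s y_j <= ||y||, and mu ||y||^2 <= ||w||^2. *)
Lemma signed_basis_preimage m n (D : 'M[R]_(m, n)) (mu : R) (j : 'I_m) (s : R) :
  (forall w, mu * bform 1%:M w w <= bform (D *m D^T) w w) ->
  D *m D^T \in unitmx -> s ^+ 2 = 1 ->
  exists w : 'cV[R]_n, D *m w = s *: delta_mx j 0 /\ mu * sqnorm w <= 1.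
Proof.
move=> hmu hunit s2.
set A := D *m D^T.
have hAT : A^T = A by rewrite /A trmx_mul trmxK.
pose e : 'rV[R]_m := s *: delta_mx 0 j.
pose y := e *m invmx A.
have hyA : y *m A = e by rewrite /y mulmxKV.
clearbody y.
exists (y *m D)^T; split.
  rewrite trmx_mul mulmxA -/A -hAT -trmx_mul hyA /e linearZ /=.
  by rewrite trmx_delta.
pose P := s * y 0 j.
have hwP : sqnorm (y *m D)^T = P.
  by rewrite -bform1 -bform_gram -/A /bform hyA /e -scalemxAl mxE -rowE !mxE.
have hP2 : P ^+ 2 <= bform 1%:M y y.
  rewrite /P exprMn s2 mul1r bform1 /sqnorm (bigD1 j) //= mxE lerDl.
  by apply: sumr_ge0 => i _; exact: sqr_ge0.
have hmuy : mu * bform 1%:M y y <= P by rewrite -hwP -bform1 -bform_gram; exact: hmu.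
have P0 : 0 <= P by rewrite -hwP sqnorm_ge0.
rewrite hwP; have [mu_le0|mu_gt0] := lerP mu 0.
  exact: le_trans (mulr_le0_ge0 mu_le0 P0) ler01.
have hP : mu * P * P <= P.
  by apply: le_trans _ hmuy; rewrite -mulrA -expr2 ler_pM2l.
have [->|Pn0] := eqVneq P 0; first by rewrite mulr0 ler01.
by rewrite -(ler_pM2r (x := P)) ?mul1r // lt_def Pn0 P0.
Qed.

End GramMatrix.

Theorem mainTheorem9 (R : realType) (m n : nat)
  (b : 'cV[R]_n) (c : 'cV[R]_m) (D : 'M[R]_(m, n))
  (hD : forall y : 'cV[R]_m, exists x : 'cV[R]_n, D *m x = y)
  (K : nat) (hK : (K < m)%N) (gamma : R) (hgamma : 0 < gamma)
  (xs : 'cV[R]_n) (hxs : dstationary (objective b c D K gamma) xs)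
  (xbar : 'cV[R]_n) (hxbar : D *m xbar = c)
  (hgam : norm2 (b - xbar) / sigma_min D < gamma) :
  Ttrim K (D *m xs - c) = 0.
Proof.
have [mu [mu0 hsig hmu hunit]] := surjective_gram hD (leq_ltn_trans (leq0n K) hK).
apply/eqP; rewrite eq_le Ttrim_ge0 andbT leNgt; apply/negP => Tpos.
have [j [s [eps [s2 eps0 hdesc]]]] := Ttrim_descent Tpos.
have [w [hDw hw]] := signed_basis_preimage j hmu hunit s2.
have hgw : gamma <= dotp (b - xs) w.
  have := dstationary_linear_rate (d := - w) (tau := -1) hxs eps0.
  rewrite dotpN opprK mulrN1 subr_ge0; apply => t t_eps.
  rewrite mulrN1 -hdesc // mulmxDr -scalemxAr mulmxN hDw.
  by rewrite scalerN addrAC.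
have hg := sqnorm_ge_of_dotp hgamma mu0 hgw hw.
have hdist := dstationary_sqnorm_le (ltW hgamma) hxs hxbar.
move: hgam; rewrite hsig ltr_pdivrMr ?sqrtr_gt0 // => hlt.
have N0 : 0 <= norm2 (b - xbar) by apply: sqrtr_ge0.
have := ltr_pM N0 N0 hlt hlt.
rewrite -!expr2 norm2_sqr exprMn sqr_sqrtr ?ltW //; lra.
Qed.
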